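(* Let $R$ be a commutative ring with unit and let $M_0\prec M\subset\mathbb{M}_R$. Then the homomorphism $\rho^R_{M,M_0}\colon R[q]^M\to R[q]^{M_0}$ is injective.
   Context: All rings are commutative with unit; $q$ is an indeterminate. $\mathbb{M}_R$ denotes the set of monic polynomials in $R[q]$. For $M\subset\mathbb{M}_R$, $M^*$ is the multiplicative set generated by $M$, directed by divisibility, and $R[q]^M=\varprojlim_{f\in M^*}R[q]/(f)$; for $M'\subset M$, $\rho^R_{M,M'}\colon R[q]^M\to R[q]^{M'}$ is induced by the identity of $R[q]$. For $f,g\in\mathbb{M}_R$ write $f\Rightarrow_R g$ if there exist an ideal $I\subset R$ with $\bigcap_{j\ge0}I^j=(0)$ and an integer $m\ge0$ such that $f^m\in (g)+I[q]$. For $M',M\subset\mathbb{M}_R$ write $M'\prec M$ if $M'\subset M$ and for each $f\in M$ there is a finite sequence $f_0\Rightarrow_R f_1\Rightarrow_R\cdots\Rightarrow_R f_r=f$ ($r\ge0$) of elements of $M$ with $f_0\in M'$. *)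

From mathcomp Require Import all_boot all_algebra.
Set Implicit Arguments. Unset Strict Implicit. Unset Printing Implicit Defensive.
Import GRing.Theory.
Local Open Scope ring_scope.

Section Defs.
Variable R : comNzRingType.

Definition polyset := {poly R} -> Prop.

Definition pdvd (f g : {poly R}) : Prop := exists h : {poly R}, g = h * f.

Definition pcong (f a b : {poly R}) : Prop := exists h : {poly R}, a - b = h * f.

Definition monic_set (M : polyset) : Prop := forall f, M f -> f \is monic.

Inductive mult_gen (M : polyset) : {poly R} -> Prop :=
| mg_one : mult_gen M 1
| mg_mul f g : M f -> mult_gen M g -> mult_gen M (f * g).

Definition is_ideal (I : R -> Prop) : Prop :=
  [/\ I 0, (forall x y, I x -> I y -> I (x + y)) & (forall r x, I x -> I (r * x))].

Inductive ideal_mul (A B : R -> Prop) : R -> Prop :=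
| im_zero : ideal_mul A B 0
| im_prod a b : A a -> B b -> ideal_mul A B (a * b)
| im_add x y : ideal_mul A B x -> ideal_mul A B y -> ideal_mul A B (x + y).

Fixpoint ideal_pow (I : R -> Prop) (j : nat) : R -> Prop :=
  match j with
  | O => fun _ => True
  | S j' => ideal_mul (ideal_pow I j') I
  end.

Definition impl_R (f g : {poly R}) : Prop :=
  exists I : R -> Prop,
    [/\ is_ideal I,
        (forall x, (forall j, ideal_pow I j x) -> x = 0) &
        exists (m : nat) (h k : {poly R}),
          f ^+ m = h * g + k /\ forall i, I k`_i].

Inductive chain_reach (M' M : polyset) : {poly R} -> Prop :=
| cr_base f : M' f -> M f -> chain_reach M' M f
| cr_step f g : chain_reach M' M f -> M g -> impl_R f g -> chain_reach M' M g.

Definition prec (M' M : polyset) : Prop :=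
  (forall f, M' f -> M f) /\ (forall f, M f -> chain_reach M' M f).

(* Elements of R[q]^M = lim_{f in M^*} R[q]/(f): families x (x f a
   representative of the f-component), compatible along divisibility. *)
Definition compat (M : polyset) (x : {poly R} -> {poly R}) : Prop :=
  forall f g, mult_gen M f -> mult_gen M g -> pdvd f g -> pcong f (x g) (x f).

(* Equality of two such families in R[q]^M. *)
Definition lim_eq (M : polyset) (x y : {poly R} -> {poly R}) : Prop :=
  forall f, mult_gen M f -> pcong f (x f) (y f).

End Defs.

(** Fix [F] in [M^*] and look at [x F - y F] modulo [F].  If [f =>_R g] with
    [f^m = a g + c], [c] in [I[q]], then [f^(m(n+k))] is [g^k] times something
    plus a polynomial with coefficients in [I^n].  When [x] and [y] agree
    modulo [f^N h], compatibility along the common multiple [f^N g^k h] shows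
    that [x - y] at [g^k h] is, modulo [g^k h], a multiple of [f^N h], hence of
    a polynomial with coefficients in [I^n].  Since division by a monic
    polynomial preserves [I^n[q]], the remainder of [x - y] lies in every
    [I^n[q]] and therefore vanishes.  Agreement thus propagates along every
    chain [f_0 => ... => f_r] starting in [M_0], and so to all of [M^*]. *)
From mathcomp Require Import all_boot all_algebra.
From mathcomp Require Import ring zify.
Set Implicit Arguments. Unset Strict Implicit. Unset Printing Implicit Defensive.
Import GRing.Theory Pdiv.CommonRing Pdiv.RingMonic.
Local Open Scope ring_scope.

Lemma ideal_pow_is_ideal (R : comNzRingType) (I : R -> Prop) :
  is_ideal I -> forall n, is_ideal (ideal_pow I n).
Proof.
move=> [_ _ IM]; case=> [|n] /=; first by split.
split; [exact: im_zero | by move=> a b; apply: im_add |].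
move=> r a; elim=> [|u v Iu Iv|u v _ IHu _ IHv].
- by rewrite mulr0; apply: im_zero.
- by rewrite mulrCA; apply: im_prod => //; apply: IM.
- by rewrite mulrDr; apply: im_add.
Qed.

Section CoefsInIdeal.
Variable R : comNzRingType.
Implicit Types (J : R -> Prop) (p q : {poly R}).

Definition coefs_in J p := forall i, J p`_i.

Lemma coefs_in0 J : is_ideal J -> coefs_in J 0.
Proof. by case=> J0 _ _ i; rewrite coef0. Qed.

Lemma coefs_inD J p q :
  is_ideal J -> coefs_in J p -> coefs_in J q -> coefs_in J (p + q).
Proof. by case=> _ JD _ Jp Jq i; rewrite coefD; apply: JD. Qed.

Lemma ideal_sum J n (F : 'I_n -> R) :
  is_ideal J -> (forall i, J (F i)) -> J (\sum_(i < n) F i).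
Proof. by case=> J0 JD _ JF; apply: (big_ind J). Qed.

Lemma coefs_inMl J p q : is_ideal J -> coefs_in J q -> coefs_in J (p * q).
Proof.
move=> idealJ Jq i; rewrite coefM; apply: ideal_sum => // j.
by case: idealJ => _ _; apply.
Qed.

Lemma coefs_inMr J p q : is_ideal J -> coefs_in J p -> coefs_in J (p * q).
Proof. by move=> idealJ Jp; rewrite mulrC; apply: coefs_inMl. Qed.

Lemma coefs_in_rmodp J p d :
  is_ideal J -> d \is monic -> coefs_in J p -> coefs_in J (rmodp p d).
Proof.
move=> idealJ mon_d Jp i.
rewrite -[p]coefK poly_def (rmodp_sum mon_d) coef_sum.
apply: ideal_sum => // j; rewrite (rmodpZ mon_d) coefZ mulrC.
by case: idealJ => _ _; apply.
Qed.

Variables (I : R -> Prop) (idealI : is_ideal I).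

Lemma coefs_in_powM n p q :
  coefs_in (ideal_pow I n) p -> coefs_in I q ->
  coefs_in (ideal_pow I n.+1) (p * q).
Proof.
move=> Ip Iq i; rewrite coefM.
apply: ideal_sum; first exact: ideal_pow_is_ideal.
by move=> j /=; apply: im_prod.
Qed.

Lemma coefs_in_exp c n :
  coefs_in I c -> coefs_in (ideal_pow I n) (c ^+ n).
Proof.
move=> Ic; elim: n => [|n IHn] //.
by rewrite exprSr; apply: coefs_in_powM.
Qed.

(* The terms of the binomial expansion with at least [k] factors [a g] are
   multiples of [g^k]; the others have at least [n] factors [c]. *)
Lemma exprD_split_mod a g c n k : coefs_in I c ->
  exists u v, (a * g + c) ^+ (n + k) = u * g ^+ k + v
              /\ coefs_in (ideal_pow I n) v.
Proof.
move=> Ic; have idealIn := ideal_pow_is_ideal idealI n.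
rewrite addrC exprDn.
apply: (big_ind (fun s => exists u v, s = u * g ^+ k + v
                                     /\ coefs_in (ideal_pow I n) v)).
- by exists 0, 0; rewrite mul0r addr0; split; last exact: coefs_in0.
- move=> _ _ [u1 [v1 [-> Iv1]]] [u2 [v2 [-> Iv2]]].
  exists (u1 + u2), (v1 + v2); split; first by ring.
  exact: coefs_inD.
- move=> [i _] _ /=; case: (leqP k i) => [le_ki | lt_ik].
  + exists (c ^+ (n + k - i) * a ^+ i * g ^+ (i - k) *+ 'C(n + k, i)), 0.
    split; last exact: coefs_in0.
    have split_gi : g ^+ i = g ^+ (i - k) * g ^+ k by rewrite -exprD subnK.
    by rewrite addr0 exprMn split_gi !mulrnAl !mulrA.
  + exists 0, (c ^+ (n + k - i) * (a * g) ^+ i *+ 'C(n + k, i)).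
    split; first by rewrite mul0r add0r.
    rewrite -mulr_natr; apply: coefs_inMr => //; apply: coefs_inMr => //.
    rewrite -(subnK (_ : (n <= n + k - i)%N)); last by lia.
    by rewrite exprD; apply: coefs_inMl => //; apply: coefs_in_exp.
Qed.

Hypothesis separatedI : forall a, (forall j, ideal_pow I j a) -> a = 0.

Lemma pdvd_separated d p : d \is monic ->
  (forall n, exists u v, p = u * d + v /\ coefs_in (ideal_pow I n) v) ->
  pdvd d p.
Proof.
move=> mon_d near_p; suff rem0 : rmodp p d = 0.
  by exists (rdivp p d); rewrite {1}(rdivp_eq mon_d p) rem0 addr0.
apply/polyP => i; rewrite coef0; apply: separatedI => n.
have [u [v [-> In_v]]] := near_p n.
rewrite (rmodpD mon_d) (rmodp_mull mon_d) add0r.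
by apply: coefs_in_rmodp => //; exact: ideal_pow_is_ideal.
Qed.

End CoefsInIdeal.

Section MultGen.
Variables (R : comNzRingType) (M : polyset R).

Lemma mult_genM f g : mult_gen M f -> mult_gen M g -> mult_gen M (f * g).
Proof.
move=> Mf Mg; elim: Mf => [|a b Ma _ IHb]; first by rewrite mul1r.
by rewrite -mulrA; apply: mg_mul.
Qed.

Lemma mult_genX f j : M f -> mult_gen M (f ^+ j).
Proof.
move=> Mf; elim: j => [|j IHj]; first exact: mg_one.
by rewrite exprS; apply: mg_mul.
Qed.

Lemma mult_gen_monic f : monic_set M -> mult_gen M f -> f \is monic.
Proof.
move=> monM; elim=> [|a b Ma _ IHb]; first exact: monic1.
by rewrite monicMl // monM.
Qed.

Lemma mult_gen_sub (M0 : polyset R) f :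
  (forall g, M0 g -> M g) -> mult_gen M0 f -> mult_gen M f.
Proof.
move=> subM; elim=> [|a b Ma _ IHb]; first exact: mg_one.
by apply: mg_mul => //; apply: subM.
Qed.

End MultGen.

Section Agreement.
Variables (R : comNzRingType) (M : polyset R) (x y : {poly R} -> {poly R}).
Hypotheses (monM : monic_set M) (compat_x : compat M x) (compat_y : compat M y).

Definition agree_at f := pcong f (x f) (y f).

Lemma compat_diff_mod P F G :
  mult_gen M P -> mult_gen M F -> mult_gen M G -> pdvd P G -> pdvd F G ->
  agree_at P -> exists a b, x F - y F = a * F + b * P.
Proof.
move=> MP MF MG dvd_PG dvd_FG [h0 agreeP].
have [h1 xPG] := compat_x MP MG dvd_PG; have [h2 yPG] := compat_y MP MG dvd_PG.
have [h3 xFG] := compat_x MF MG dvd_FG; have [h4 yFG] := compat_y MF MG dvd_FG.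
exists (h4 - h3), (h1 - h2 + h0).
have -> : x F - y F = (x G - y G) - (x G - x F) + (y G - y F) by ring.
have -> : x G - y G = (x G - x P) - (y G - y P) + (x P - y P) by ring.
by rewrite xPG yPG agreeP xFG yFG; ring.
Qed.

Lemma agree_impl f g h : M f -> M g -> mult_gen M h -> impl_R f g ->
  (forall j, agree_at (f ^+ j * h)) -> forall k, agree_at (g ^+ k * h).
Proof.
move=> Mf Mg Mh [I [idealI sepI [m [a [c [fm Ic]]]]]] agree_f k.
set F := g ^+ k * h.
have MF : mult_gen M F by apply: mult_genM => //; apply: mult_genX.
apply: (pdvd_separated idealI sepI (mult_gen_monic monM MF)) => n.
have [u [v [split_fN Iv]]] := exprD_split_mod idealI a g n k Ic.
set N := (m * (n + k))%N.
have MfN : mult_gen M (f ^+ N) by apply: mult_genX.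
have dvd_PG : pdvd (f ^+ N * h) (f ^+ N * F) by exists (g ^+ k); rewrite mulrCA.
have dvd_FG : pdvd F (f ^+ N * F) by exists (f ^+ N).
have [b [d diff_F]] := compat_diff_mod (mult_genM MfN Mh) MF (mult_genM MfN MF)
  dvd_PG dvd_FG (agree_f N).
exists (b + d * u), (d * h * v); split.
  by rewrite diff_F exprM fm split_fN /F; ring.
by apply: coefs_inMl => //; apply: ideal_pow_is_ideal.
Qed.

Variable M0 : polyset R.
Hypothesis precM0 : prec M0 M.

Lemma agree_chain f g :
  mult_gen M f -> (forall h0, mult_gen M0 h0 -> agree_at (f * h0)) ->
  chain_reach M0 M g ->
  forall k h0, mult_gen M0 h0 -> agree_at (g ^+ k * (f * h0)).
Proof.
have [subM0 _] := precM0.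
move=> Mf agree_f; elim=> [g0 M0g0 _ | g0 g1 chain_g0 IHg0 Mg1 impl_g01] k h0 M0h0.
  by rewrite mulrCA; apply: agree_f; apply: mult_genM => //; apply: mult_genX.
apply: (agree_impl _ Mg1 _ impl_g01) => [| | j]; last exact: IHg0.
  by case: chain_g0.
by apply: mult_genM => //; apply: mult_gen_sub M0h0.
Qed.

Lemma agree_mult_gen : lim_eq M0 x y ->
  forall f, mult_gen M f -> forall h0, mult_gen M0 h0 -> agree_at (f * h0).
Proof.
have [_ chainM] := precM0.
move=> agree0 f; elim=> [|g f' Mg Mf' agree_f'] h0 M0h0.
  by rewrite mul1r; apply: agree0.
by rewrite -mulrA -[g]expr1; apply: agree_chain => //; apply: chainM.
Qed.

End Agreement.

Theorem theorem3p4 (R : comNzRingType) (M0 M : polyset R) :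
  monic_set M -> prec M0 M ->
  forall x y : {poly R} -> {poly R},
    compat M x -> compat M y -> lim_eq M0 x y -> lim_eq M x y.
Proof.
move=> monM precM0 x y compat_x compat_y agree0 f Mf.
have := agree_mult_gen monM compat_x compat_y precM0 agree0 Mf (mg_one _).
by rewrite mulr1.
Qed.
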